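(* Let $M$ be a Malcev algebra over a field of characteristic different from $2$ and $3$, and let $X$ be a generating set of $M$ (as an algebra). If $\mathrm{J}(x,y,z)=0$ for all $x,y,z\in X$, then $\mathrm{J}(u,v,w)=0$ for all $u,v,w\in M$, i.e. $M$ is a Lie algebra.
   Context: A Malcev algebra is an anticommutative algebra (with product written $xy$) satisfying the Malcev identity $(xy)(xz)=((xy)z)x+((yz)x)x+((zx)x)y$. For elements $a,b,c$ of an algebra, the Jacobian is $\mathrm{J}(a,b,c)=(ab)c+(bc)a+(ca)b$. A Lie algebra is an anticommutative algebra in which $\mathrm{J}$ vanishes identically. *)

From HB Require Import structures.
From mathcomp Require Import all_boot all_order all_algebra.
Set Implicit Arguments. Unset Strict Implicit. Unset Printing Implicit Defensive.
Import GRing.Theory.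
Local Open Scope ring_scope.

Definition bilinear_product (F : fieldType) (M : lmodType F) (mul : M -> M -> M) : Prop :=
  (forall (a : F) (x y z : M), mul (a *: x + y) z = a *: mul x z + mul y z) /\
  (forall (a : F) (x y z : M), mul x (a *: y + z) = a *: mul x y + mul x z).

Definition anticommutative (F : fieldType) (M : lmodType F) (mul : M -> M -> M) : Prop :=
  forall x : M, mul x x = 0.

Definition malcev_identity (F : fieldType) (M : lmodType F) (mul : M -> M -> M) : Prop :=
  forall x y z : M,
    mul (mul x y) (mul x z) =
      mul (mul (mul x y) z) x + mul (mul (mul y z) x) x + mul (mul (mul z x) x) y.

Definition is_malcev_algebra (F : fieldType) (M : lmodType F) (mul : M -> M -> M) : Prop :=
  [/\ bilinear_product mul, anticommutative mul & malcev_identity mul].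

Definition jacobian (F : fieldType) (M : lmodType F) (mul : M -> M -> M) (a b c : M) : M :=
  mul (mul a b) c + mul (mul b c) a + mul (mul c a) b.

Definition subalgebra_closed (F : fieldType) (M : lmodType F) (mul : M -> M -> M)
  (S : M -> Prop) : Prop :=
  [/\ S 0,
      (forall (a : F) x y, S x -> S y -> S (a *: x + y)) &
      (forall x y, S x -> S y -> S (mul x y))].

Definition generates (F : fieldType) (M : lmodType F) (mul : M -> M -> M)
  (X : M -> Prop) : Prop :=
  forall S : M -> Prop, subalgebra_closed mul S -> (forall x, X x -> S x) -> forall m, S m.

From HB Require Import structures.
From mathcomp Require Import all_boot all_order all_algebra zify.
Set Implicit Arguments. Unset Strict Implicit. Unset Printing Implicit Defensive.
Import GRing.Theory.
Local Open Scope ring_scope.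

(* In a Malcev algebra the Jacobian of a product is controlled by Jacobians
   of the factors:
     2 (3 J(pq,v,w) + p J(q,v,w) + J(p,v,w) q - 2 v J(w,p,q) - 2 J(v,p,q) w) = 0.
   As 6 is invertible, J vanishes on (pq, v, w) once it vanishes on four
   triples of smaller total degree, so induction on degree kills J on all
   triples of monomials in the generators; trilinearity extends this to their
   span, a subalgebra containing X and hence all of M.  The identity is a
   linear consequence of linearized instances of the Malcev identity, verified
   by normalization in the free anticommutative algebra. *)

(* [vanishes t] is a sound test that [t] is zero in every biadditive
   anticommutative algebra: expand [t] into signed bracket monomials, orient
   every bracket along [lttree] (dropping brackets [x x]), then cancel
   opposite pairs. *)
Inductive term :=
  | Var of nat
  | Mul of term & term
  | Add of term & term
  | Opp of term.

Inductive tree := Leaf of nat | Node of tree & tree.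

Fixpoint eqtree (s t : tree) : bool :=
  match s, t with
  | Leaf n, Leaf m => n == m
  | Node s1 s2, Node t1 t2 => eqtree s1 t1 && eqtree s2 t2
  | _, _ => false
  end.

Lemma eqtreeP s t : eqtree s t -> s = t.
Proof.
elim: s t => [n|s1 IH1 s2 IH2] [m|t1 t2] //=; first by move/eqP->.
by case/andP=> /IH1-> /IH2->.
Qed.

Fixpoint lttree (s t : tree) : bool :=
  match s, t with
  | Leaf n, Leaf m => (n < m)%N
  | Leaf _, Node _ _ => true
  | Node _ _, Leaf _ => false
  | Node s1 s2, Node t1 t2 => lttree s1 t1 || eqtree s1 t1 && lttree s2 t2
  end.

Definition signed_tree := (bool * tree)%type.

Definition opp_signed (p : signed_tree) : signed_tree := (~~ p.1, p.2).

Definition mul_signed (l1 l2 : seq signed_tree) : seq signed_tree :=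
  [seq (p1.1 (+) p2.1, Node p1.2 p2.2) | p1 <- l1, p2 <- l2].

Fixpoint expand (t : term) : seq signed_tree :=
  match t with
  | Var n => [:: (false, Leaf n)]
  | Mul a b => mul_signed (expand a) (expand b)
  | Add a b => expand a ++ expand b
  | Opp a => map opp_signed (expand a)
  end.

Fixpoint orient (s : tree) : option signed_tree :=
  match s with
  | Leaf n => Some (false, Leaf n)
  | Node a b =>
    if (orient a, orient b) is (Some (s1, a'), Some (s2, b')) then
      if eqtree a' b' then None
      else if lttree a' b' then Some (s1 (+) s2, Node a' b')
      else Some (~~ (s1 (+) s2), Node b' a')
    else None
  end.

Definition orient_all (l : seq signed_tree) : seq signed_tree :=
  pmap (fun p => omap (fun q => (p.1 (+) q.1, q.2)) (orient p.2)) l.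

Fixpoint remove_opp (p : signed_tree) (l : seq signed_tree) : option (seq signed_tree) :=
  if l is q :: r then
    if (q.1 == ~~ p.1) && eqtree p.2 q.2 then Some r
    else omap (cons q) (remove_opp p r)
  else None.

Fixpoint cancels (fuel : nat) (l : seq signed_tree) : bool :=
  match fuel, l with
  | _, [::] => true
  | fuel.+1, p :: r => if remove_opp p r is Some r' then cancels fuel r' else false
  | 0, _ :: _ => false
  end.

Definition vanishes (t : term) : bool :=
  let l := orient_all (expand t) in cancels (size l) l.

Section Soundness.
Variables (M : zmodType) (mul : M -> M -> M).
Hypothesis productDl : forall x y z, mul (x + y) z = mul x z + mul y z.
Hypothesis productDr : forall x y z, mul x (y + z) = mul x y + mul x z.
Hypothesis productxx : forall x, mul x x = 0.

Lemma product0l z : mul 0 z = 0.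
Proof. by apply: (addrI (mul 0 z)); rewrite -productDl !addr0. Qed.

Lemma product0r z : mul z 0 = 0.
Proof. by apply: (addrI (mul z 0)); rewrite -productDr !addr0. Qed.

Lemma productNl x z : mul (- x) z = - mul x z.
Proof. by apply: (addrI (mul x z)); rewrite -productDl !subrr product0l. Qed.

Lemma productNr x z : mul x (- z) = - mul x z.
Proof. by apply: (addrI (mul x z)); rewrite -productDr !subrr product0r. Qed.

Lemma product_anti x y : mul x y = - mul y x.
Proof.
apply/eqP; rewrite -addr_eq0 -[X in _ == X](productxx (x + y)).
by rewrite productDl !productDr !productxx add0r addr0.
Qed.

Variable e : seq M.

Fixpoint eval (t : term) : M :=
  match t with
  | Var n => nth 0 e n
  | Mul a b => mul (eval a) (eval b)
  | Add a b => eval a + eval b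
  | Opp a => - eval a
  end.

Fixpoint eval_tree (s : tree) : M :=
  match s with
  | Leaf n => nth 0 e n
  | Node a b => mul (eval_tree a) (eval_tree b)
  end.

Definition eval_signed (p : signed_tree) : M :=
  if p.1 then - eval_tree p.2 else eval_tree p.2.

Definition eval_sum (l : seq signed_tree) : M := \sum_(p <- l) eval_signed p.

Lemma eval_signed_opp p : eval_signed (opp_signed p) = - eval_signed p.
Proof. by case: p => [[] s]; rewrite /eval_signed /= ?opprK. Qed.

Lemma eval_signed_mul p q :
  eval_signed (p.1 (+) q.1, Node p.2 q.2) = mul (eval_signed p) (eval_signed q).
Proof.
by case: p q => [[] s] [[] t]; rewrite /eval_signed /= ?productNl ?productNr ?opprK.
Qed.

Lemma eval_sum_mul l1 l2 :
  eval_sum (mul_signed l1 l2) = mul (eval_sum l1) (eval_sum l2).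
Proof.
rewrite /eval_sum /mul_signed.
elim: l1 => [|p l1 IH]; first by rewrite !big_nil product0l.
rewrite /= big_cat big_cons productDl IH; congr (_ + _); clear IH.
elim: l2 => [|q l2 IH2]; first by rewrite !big_nil product0r.
by rewrite /= !big_cons IH2 productDr eval_signed_mul.
Qed.

Lemma eval_expand t : eval t = eval_sum (expand t).
Proof.
elim: t => [n|a IHa b IHb|a IHa b IHb|a IHa] /=.
- by rewrite /eval_sum big_seq1.
- by rewrite eval_sum_mul IHa IHb.
- by rewrite IHa IHb /eval_sum big_cat.
- rewrite IHa /eval_sum big_map -sumrN.
  by apply: eq_bigr => p _; rewrite eval_signed_opp.
Qed.

Definition orient_spec (s : tree) (o : option signed_tree) : Prop :=
  if o is Some p then eval_tree s = eval_signed p else eval_tree s = 0.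

Lemma orientP s : orient_spec s (orient s).
Proof.
elim: s => [n|a IHa b IHb] //=.
case: (orient a) IHa => [[s1 a']|] /= IHa; case: (orient b) IHb => [[s2 b']|] /= IHb;
  rewrite /orient_spec /= ?IHa ?IHb ?product0l ?product0r //.
rewrite -(eval_signed_mul (s1, a') (s2, b')) /=.
case: ifP => [/eqtreeP->|_]; first by rewrite /eval_signed /= productxx oppr0; case: (_ (+) _).
case: ifP => _ //; rewrite /eval_signed /= (product_anti (eval_tree b')).
by case: (_ (+) _); rewrite /= ?opprK.
Qed.

Lemma eval_orient_all l : eval_sum (orient_all l) = eval_sum l.
Proof.
rewrite /eval_sum; elim: l => [|[b s] l IH] //=.
rewrite big_cons -IH; have := orientP s; rewrite /eval_signed.
case: (orient s) => [[b' s']|] /= ->; rewrite ?big_cons /=.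
  by case: b; case: b'; rewrite ?opprK.
by case: b; rewrite ?oppr0 add0r.
Qed.

Lemma remove_oppP p l r : remove_opp p l = Some r ->
  eval_sum l = - eval_signed p + eval_sum r.
Proof.
rewrite /eval_sum; elim: l r => [|q l IH] r //=.
case: ifP => [/andP[/eqP q1 /eqtreeP q2] [<-]|_].
  by rewrite big_cons /eval_signed q1 -q2; case: (p.1); rewrite /= ?opprK.
case E: (remove_opp p l) => [r'|] //= [<-].
by rewrite !big_cons (IH _ E) addrCA.
Qed.

Lemma cancelsP fuel l : cancels fuel l -> eval_sum l = 0.
Proof.
elim: fuel l => [|fuel IH] [|p l] //=; try by rewrite /eval_sum big_nil.
case E: (remove_opp p l) => [r|] // /IH r0.
by rewrite /eval_sum big_cons -/(eval_sum l) (remove_oppP E) r0 addr0 subrr.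
Qed.

Lemma vanishesP t : vanishes t -> eval t = 0.
Proof. by move/cancelsP; rewrite eval_orient_all -eval_expand. Qed.

End Soundness.

Definition Minus (a b : term) : term := Add a (Opp b).

Definition jacobian_term (a b c : term) : term :=
  Add (Add (Mul (Mul a b) c) (Mul (Mul b c) a)) (Mul (Mul c a) b).

Definition malcev_term (x y z : term) : term :=
  Minus (Mul (Mul x y) (Mul x z))
        (Add (Add (Mul (Mul (Mul x y) z) x) (Mul (Mul (Mul y z) x) x))
             (Mul (Mul (Mul z x) x) y)).

Definition malcev_lin_term (x t y z : term) : term :=
  Minus (malcev_term (Add x t) y z) (Add (malcev_term x y z) (malcev_term t y z)).

Definition jacobian_product_term (p q v w : term) : term :=
  let j := jacobian_term (Mul p q) v w in
  let k1 := Mul v (jacobian_term w p q) in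
  let k2 := Mul (jacobian_term v p q) w in
  Minus (Minus (Add (Add (Add (Add j j) j) (Mul p (jacobian_term q v w)))
                    (Mul (jacobian_term p v w) q))
               (Add k1 k1))
        (Add k2 k2).

(* Twice [jacobian_product_term] is the sum of these 15 instances of the
   linearized Malcev identity; the multiplicities were found by solving a
   linear system over the free anticommutative algebra. *)
Definition malcev_lin_indices : seq (nat * nat * nat * nat) :=
  [:: (0,1,2,3); (0,1,3,2); (0,1,3,2); (0,1,3,2); (0,1,3,2); (0,2,1,3); (0,2,1,3);
      (0,2,3,1); (0,2,3,1); (0,2,3,1); (0,2,3,1); (0,2,3,1); (0,3,1,2); (0,3,1,2);
      (0,3,1,2)].

Definition sub_malcev_lins (t : term) (l : seq (nat * nat * nat * nat)) : term :=
  foldl (fun acc '(a, b, c, d) =>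
           Minus acc (malcev_lin_term (Var a) (Var b) (Var c) (Var d))) t l.

Lemma jacobian_product_vanishes :
  let K := jacobian_product_term (Var 0) (Var 1) (Var 2) (Var 3) in
  vanishes (sub_malcev_lins (Add K K) malcev_lin_indices).
Proof. by vm_compute. Qed.

Section MalcevIdentities.
Variables (F : fieldType) (M : lmodType F) (mul : M -> M -> M).
Hypothesis productDl : forall x y z, mul (x + y) z = mul x z + mul y z.
Hypothesis productDr : forall x y z, mul x (y + z) = mul x y + mul x z.
Hypothesis productxx : anticommutative mul.
Hypothesis malcev : malcev_identity mul.

Lemma eval_sub_malcev_lins e t l :
  eval mul e (sub_malcev_lins t l) = eval mul e t.
Proof.
elim: l t => [|[[[a b] c] d] l IH] t //=.
by rewrite IH /= !malcev !subrr addr0 subrr subr0.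
Qed.

Lemma jacobian_mul_malcev p q v w :
  (jacobian mul (mul p q) v w *+ 3 + mul p (jacobian mul q v w) + mul (jacobian mul p v w) q
   - mul v (jacobian mul w p q) *+ 2 - mul (jacobian mul v p q) w *+ 2) *+ 2 = 0.
Proof.
have := vanishesP productDl productDr productxx [:: p; q; v; w] jacobian_product_vanishes.
rewrite eval_sub_malcev_lins /= => <-.
by rewrite [_ *+ 3]mulrSr !mulr2n.
Qed.

End MalcevIdentities.

Lemma natmul6_eq0 (F : fieldType) (M : lmodType F) (x : M) :
  (2 \notin [pchar F])%N -> (3 \notin [pchar F])%N -> x *+ 6 = 0 -> x = 0.
Proof.
move=> char2 char3 /eqP; rewrite -scaler_nat scaler_eq0 => /orP[|/eqP //].
rewrite (natrM F 2 3) mulf_eq0 => /orP[] p0.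
- by case/negP: char2; rewrite inE /= p0.
- by case/negP: char3; rewrite inE /= p0.
Qed.

Section Generation.
Variables (F : fieldType) (M : lmodType F) (mul : M -> M -> M).
Hypothesis bilinear : bilinear_product mul.
Hypothesis productxx : anticommutative mul.
Hypothesis malcev : malcev_identity mul.

Local Notation J := (jacobian mul).

Lemma productZDl a x y z : mul (a *: x + y) z = a *: mul x z + mul y z.
Proof. exact: bilinear.1. Qed.

Lemma productZDr a x y z : mul x (a *: y + z) = a *: mul x y + mul x z.
Proof. exact: bilinear.2. Qed.

Lemma productDl x y z : mul (x + y) z = mul x z + mul y z.
Proof. by have := productZDl 1 x y z; rewrite !scale1r. Qed.

Lemma productDr x y z : mul x (y + z) = mul x y + mul x z.
Proof. by have := productZDr 1 x y z; rewrite !scale1r. Qed.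

Lemma jacobian0l y z : J 0 y z = 0.
Proof. by rewrite /jacobian !(product0l productDl, product0r productDr) !addr0. Qed.

Lemma jacobianZDl a x x' y z : J (a *: x + x') y z = a *: J x y z + J x' y z.
Proof.
rewrite /jacobian !productZDl !productZDr productZDl !scalerDr.
by rewrite (addrACA (a *: mul (mul x y) z)) (addrACA (a *: mul (mul x y) z + _)).
Qed.

Lemma jacobian_cycle x y z : J x y z = J y z x.
Proof. by rewrite /jacobian -addrA addrC. Qed.

Hypotheses (char2 : (2 \notin [pchar F])%N) (char3 : (3 \notin [pchar F])%N).

Lemma jacobian_product_eq0 p q v w :
  J q v w = 0 -> J p v w = 0 -> J w p q = 0 -> J v p q = 0 -> J (mul p q) v w = 0.
Proof.
move=> Jqvw Jpvw Jwpq Jvpq; apply: natmul6_eq0 => //.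
have := jacobian_mul_malcev productDl productDr productxx malcev p q v w.
rewrite Jqvw Jpvw Jwpq Jvpq !(product0l productDl) !(product0r productDr).
by rewrite !mul0rn !addr0 !subr0 -mulrnA.
Qed.

Variable X : M -> Prop.
Hypothesis jacobianX : forall x y z, X x -> X y -> X z -> J x y z = 0.

Inductive monomial : nat -> M -> Prop :=
  | monomial_gen x : X x -> monomial 1 x
  | monomial_mul m n u v : monomial m u -> monomial n v -> monomial (m + n) (mul u v).

Lemma monomial_gt0 n u : monomial n u -> (0 < n)%N.
Proof. by elim=> // m n' _ _ _ m_gt0 _ _; rewrite addn_gt0 m_gt0. Qed.

Lemma jacobian_monomial a b c u v w :
  monomial a u -> monomial b v -> monomial c w -> J u v w = 0.
Proof.
move: {2}(a + b + c)%N (leqnn (a + b + c)) => n.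
elim: n a b c u v w => [|n IH] a b c u v w le_n mu mv mw.
  by have := monomial_gt0 mu; lia.
have Jproduct a1 a2 p q b' c' v' w' : monomial a1 p -> monomial a2 q ->
    monomial b' v' -> monomial c' w' -> (a1 + a2 + b' + c' <= n.+1)%N ->
    J (mul p q) v' w' = 0.
  move=> mp mq mv' mw' le'.
  have := monomial_gt0 mp; have := monomial_gt0 mq.
  have := monomial_gt0 mv'; have := monomial_gt0 mw' => *.
  apply: jacobian_product_eq0; [apply: IH mq mv' mw' | apply: IH mp mv' mw'
    | apply: IH mw' mp mq | apply: IH mv' mp mq]; lia.
case: mu le_n => [x Xx|a1 a2 p q mp mq] le_n; last exact: Jproduct mp mq mv mw _.
case: mv le_n => [y Xy|b1 b2 p q mp mq] le_n.
  case: mw le_n => [z Xz|c1 c2 p q mp mq] le_n; first exact: jacobianX.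
  by rewrite -jacobian_cycle; apply: Jproduct mp mq (monomial_gen Xx) (monomial_gen Xy) _; lia.
by rewrite jacobian_cycle; apply: Jproduct mp mq mw (monomial_gen Xx) _; lia.
Qed.

Inductive monomial_span : M -> Prop :=
  | monomial_span0 : monomial_span 0
  | monomial_spanZD a n m u :
      monomial n m -> monomial_span u -> monomial_span (a *: m + u).

Lemma monomial_span_monomial n m : monomial n m -> monomial_span m.
Proof.
by move=> mm; rewrite -[m]addr0 -[m]scale1r; apply: monomial_spanZD mm monomial_span0.
Qed.

Lemma monomial_span_lin a x y :
  monomial_span x -> monomial_span y -> monomial_span (a *: x + y).
Proof.
move=> sx sy; elim: sx => [|b n m u mm _ IH]; first by rewrite scaler0 add0r.
by rewrite scalerDr scalerA -addrA; apply: monomial_spanZD mm IH.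
Qed.

Lemma monomial_span_mul x y :
  monomial_span x -> monomial_span y -> monomial_span (mul x y).
Proof.
move=> sx sy; elim: sx => [|a n m u mm _ IH].
  by rewrite (product0l productDl); apply: monomial_span0.
rewrite productZDl; apply: monomial_span_lin IH.
elim: sy => [|b n' m' u' mm' _ IH'].
  by rewrite (product0r productDr); apply: monomial_span0.
by rewrite productZDr; apply: monomial_spanZD (monomial_mul mm mm') IH'.
Qed.

Lemma monomial_span_subalgebra : subalgebra_closed mul monomial_span.
Proof.
split; [exact: monomial_span0 | exact: monomial_span_lin | exact: monomial_span_mul].
Qed.

Lemma jacobian_spanl y z : (forall n m, monomial n m -> J m y z = 0) ->
  forall x, monomial_span x -> J x y z = 0.
Proof.
move=> Jmon x; elim=> [|a n m u mm _ IH]; first exact: jacobian0l.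
by rewrite jacobianZDl (Jmon _ _ mm) IH scaler0 addr0.
Qed.

Lemma jacobian_span x y z :
  monomial_span x -> monomial_span y -> monomial_span z -> J x y z = 0.
Proof.
move=> sx sy sz; apply: jacobian_spanl sx => a u mu; rewrite jacobian_cycle.
apply: jacobian_spanl sy => b v mv; rewrite jacobian_cycle.
apply: jacobian_spanl sz => c w mw; rewrite jacobian_cycle.
exact: jacobian_monomial mu mv mw.
Qed.

End Generation.

Theorem mainTheorem1 (F : fieldType) (M : lmodType F) (mul : M -> M -> M)
  (X : M -> Prop) :
  (2 \notin [pchar F])%N -> (3 \notin [pchar F])%N ->
  is_malcev_algebra mul ->
  generates mul X ->
  (forall x y z, X x -> X y -> X z -> jacobian mul x y z = 0) ->
  forall u v w : M, jacobian mul u v w = 0.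
Proof.
move=> char2 char3 [bilinear anti malcev] generatesX jacobianX u v w.
have spanM m : monomial_span mul X m.
  apply: generatesX (monomial_span_subalgebra bilinear X) _ m => x Xx.
  exact: monomial_span_monomial (monomial_gen mul Xx).
by apply: (jacobian_span bilinear anti malcev char2 char3 jacobianX); apply: spanM.
Qed.
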